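(* Let $G=(V,E)$ be a transitive and finite directed graph with in-degree at least $2$ at every vertex, and let $v\in V$ have in-degree $d_v\ge3$. Then the $v$-lag $\widehat{G}_v$ (for any choice of ordering of incoming edges) is a finite transitive directed graph with in-degree at least $2$ at every vertex, and it has one fewer vertex of in-degree at least $3$ than $G$.
   Context: A directed graph $G=(V,E,r,s)$; in-degree of $v$ is $|r^{-1}(v)|$; a path $e_1\cdots e_n$ has $s(e_i)=r(e_{i+1})$, and ''an edge from $u$ to $w$'' has source $u$ and range $w$; $G$ is transitive if there is a path between any two vertices. The $v$-lag $\widehat{G}_v=(\widehat{V}_v,\widehat{E}_v)$ of $G$ at a vertex $v$ of in-degree $d_v\ge3$: enumerate the edges with range $v$ as $e_0,\dots,e_{d_v-1}$, with sources $u_0,\dots,u_{d_v-1}$ (repetitions allowed). Keep all vertices of $G$ and all edges not ranging in $v$. Add new vertices $v_1,\dots,v_{d_v-2}$, an edge $f_1$ from $v_1$ to $v$, and edges $f_i$ from $v_i$ to $v_{i-1}$ for $2\le i\le d_v-2$. Replace $e_0$ by an edge $\hat e_0$ from $u_0$ to $v$; replace $e_j$ by an edge $\hat e_j$ from $u_j$ to $v_j$ for $1\le j\le d_v-2$; replace $e_{d_v-1}$ by an edge $\hat e_{d_v-1}$ from $u_{d_v-1}$ to $v_{d_v-2}$. Thus $\widehat{V}_v=V\sqcup\{v_1,\dots,v_{d_v-2}\}$. *)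

From mathcomp Require Import all_boot.
Set Implicit Arguments. Unset Strict Implicit. Unset Printing Implicit Defensive.

(* A finite directed graph G = (V, E, r, s): r = range, s = source.
   Multiple edges and loops are allowed. *)
Record digraph := Digraph {
  dV : finType;
  dE : finType;
  rg : dE -> dV;
  sr : dE -> dV
}.

Definition indeg {G : digraph} (x : dV G) : nat := #|[set e : dE G | rg e == x]|.

Definition adj (G : digraph) : rel (dV G) :=
  fun x y => [exists e : dE G, (sr e == x) && (rg e == y)].

Definition transitive_graph (G : digraph) : Prop :=
  forall u w : dV G, connect (@adj G) u w.

Section Lag.
Variables (G : digraph) (v : dV G).
Let d := indeg v.
(* ordering of the edges with range v: e_j = o j, j < d *)
Variable o : 'I_d -> dE G.

(* the new vertex v_k (1 <= k <= d-2) is  inr (k-1) ;  v_0 := v *)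
Definition lag_V : finType := (dV G + 'I_(d - 2))%type.
(* old edges (e or its replacement \hat e_j) and the new edges f_{i+1} = inr i *)
Definition lag_E : finType := (dE G + 'I_(d - 2))%type.

Definition lag_vk (k : nat) : lag_V :=
  if k == 0 then inl v
  else match insub (k - 1) with Some i => inr i | None => inl v end.

Definition lag_idx (e : dE G) : nat :=
  if [pick j | o j == e] is Some j then val j else 0.

Definition lag_rg (e : lag_E) : lag_V :=
  match e with
  | inl e => if rg e == v then lag_vk (minn (lag_idx e) (d - 2)) else inl (rg e)
  | inr i => lag_vk (val i)            (* f_{i+1} : v_{i+1} -> v_i *)
  end.

Definition lag_sr (e : lag_E) : lag_V :=
  match e with
  | inl e => inl (sr e)
  | inr i => inr i
  end.

Definition lag : digraph := @Digraph lag_V lag_E lag_rg lag_sr.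
End Lag.

From mathcomp Require Import all_boot zify.

Set Implicit Arguments.
Unset Strict Implicit.

(* The lag spreads the d in-edges of v along the new chain
   v_(d-2) -> ... -> v_1 -> v: the vertex v_k (k < d-2) receives e_k and f_(k+1),
   v_(d-2) receives e_(d-2) and e_(d-1), and all other in-degrees are unchanged.
   So v drops out of the vertices of in-degree >= 3 and nobody enters.
   Transitivity survives since an old edge u -> v becomes u -> v_k -> ... -> v,
   and each new vertex v_k is entered from the source of e_k, reachable from v. *)

Lemma card_set_sum (A B : finType) (P : pred (A + B)) :
  #|[set x | P x]| = #|[set a | P (inl a)]| + #|[set b | P (inr b)]|.
Proof.
rewrite -!sum1_card (big_sumType _ (mem [set x | P x])) /=.
by congr (_ + _); apply: eq_bigl => x; rewrite !inE.
Qed.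

Lemma connect_homo (T T' : finType) (f : T -> T') (e : rel T) (e' : rel T') :
  (forall x y, e x y -> connect e' (f x) (f y)) ->
  forall x y, connect e x y -> connect e' (f x) (f y).
Proof.
move=> fe x _ /connectP [p + ->]; elim: p x => [|z p IHp] x //= /andP [exz pz].
exact: connect_trans (fe _ _ exz) (IHp _ pz).
Qed.

Lemma card_ord_minn (d k : nat) : 2 <= d -> k <= d - 2 ->
  #|[set j : 'I_d | minn j (d - 2) == k]| = (k == d - 2).+1.
Proof.
move=> d_ge2 le_k; have [lt_k|ge_k] := ltnP k (d - 2).
  have lt_kd : k < d by lia.
  rewrite (_ : [set j | _] = [set Ordinal lt_kd]) ?cards1; last first.
    by apply/setP => j; rewrite !inE -val_eqE /=; lia.
  by rewrite ltn_eqF.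
have lt_d2 : d - 2 < d by lia.
have lt_d1 : d - 1 < d by lia.
rewrite (_ : [set j | _] = [set Ordinal lt_d2; Ordinal lt_d1]); last first.
  by apply/setP => j; rewrite !inE -!val_eqE /=; have := ltn_ord j; lia.
rewrite cards2 -val_eqE /=; lia.
Qed.

Section Lag.

Variables (G : digraph) (v : dV G) (o : 'I_(indeg v) -> dE G).
Hypothesis o_inj : injective o.
Hypothesis rg_o : forall j, rg (o j) = v.
(* Only needed so that [d - 2] is not truncated; for [d = 2] the lag adds no vertex. *)
Hypothesis d_ge2 : 2 <= indeg v.

Local Notation d := (indeg v).
Local Notation lagG := (lag o).
Local Notation vk := (lag_vk v).

Lemma lag_vkS (i : 'I_(d - 2)) : vk i.+1 = inr i.
Proof. by rewrite /lag_vk /= subn1 /= valK. Qed.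

Lemma lag_vk_inj : {in [pred k | k <= d - 2] &, injective vk}.
Proof.
move=> [|k] [|l] //; rewrite !inE => lt_k lt_l.
- by rewrite (lag_vkS (Ordinal lt_l)).
- by rewrite (lag_vkS (Ordinal lt_k)).
by rewrite (lag_vkS (Ordinal lt_k)) (lag_vkS (Ordinal lt_l)) => -[->].
Qed.

Lemma lag_vk_inl k x : vk k = inl x -> x = v.
Proof. by rewrite /lag_vk; case: eqP => [_ [] //|_]; case: insub => // -[]. Qed.

Lemma lag_idx_o j : lag_idx o (o j) = j.
Proof.
by rewrite /lag_idx; case: pickP => [k /eqP /o_inj -> //|/(_ j)]; rewrite eqxx.
Qed.

Lemma in_edges_v : [set e | rg e == v] = o @: setT.
Proof.
apply/esym/eqP; rewrite eqEcard card_imset // cardsT card_ord leqnn andbT.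
by apply/subsetP => _ /imsetP [j _ ->]; rewrite inE rg_o.
Qed.

Lemma card_in_edges_v_idx (P : pred nat) :
  #|[set e | (rg e == v) && P (lag_idx o e)]| = #|[set j : 'I_d | P j]|.
Proof.
rewrite -(card_imset _ o_inj); apply: eq_card => e.
have /setP/(_ e) := in_edges_v; rewrite !inE => ->.
apply/idP/idP => [/andP [/imsetP [j _ ->]]|/imsetP [j]].
  by rewrite lag_idx_o => Pj; rewrite mem_imset ?inE.
by rewrite inE => Pj ->; rewrite imset_f ?inE ?lag_idx_o.
Qed.

Lemma lag_rg_inl_eq_vk e k : k <= d - 2 ->
  (lag_rg o (inl e) == vk k) = (rg e == v) && (minn (lag_idx o e) (d - 2) == k).
Proof.
move=> le_k /=; have [_|ne_ev] := eqVneq (rg e) v.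
  by rewrite (inj_in_eq lag_vk_inj) ?inE ?geq_minr.
by apply: contraNF ne_ev => /eqP/esym/lag_vk_inl ->.
Qed.

Lemma lag_rg_inr_eq_vk i k : k <= d - 2 -> (lag_rg o (inr i) == vk k) = (i == k :> nat).
Proof. by move=> le_k; rewrite /= (inj_in_eq lag_vk_inj) ?inE // ltnW. Qed.

Lemma lag_indeg_vk k : k <= d - 2 -> @indeg lagG (vk k) = 2.
Proof.
move=> le_k; rewrite /indeg card_set_sum.
rewrite (eq_finset _ (fun e => lag_rg_inl_eq_vk e le_k)).
rewrite (eq_finset _ (fun i => lag_rg_inr_eq_vk i le_k)).
rewrite (card_in_edges_v_idx (fun j => minn j (d - 2) == k)) card_ord_minn //.
have [lt_k|ge_k] := ltnP k (d - 2).
  rewrite (_ : [set i | _] = [set Ordinal lt_k]) ?cards1; last first.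
    by apply/setP => i; rewrite !inE -val_eqE.
  by rewrite ltn_eqF.
rewrite (_ : [set i | _] = set0) ?cards0; last first.
  by apply/setP => i; rewrite !inE; have := ltn_ord i; lia.
lia.
Qed.

Lemma lag_indeg_old x : x != v -> @indeg lagG (inl x) = indeg x.
Proof.
move=> ne_xv; rewrite /indeg card_set_sum.
rewrite (_ : [set i : 'I_(d - 2) | _] = set0) ?cards0 ?addn0; last first.
  by apply/setP => i; rewrite !inE; apply: contraNF ne_xv => /eqP/lag_vk_inl ->.
apply: eq_card => e; rewrite !inE /=; have [ev|_] := eqVneq (rg e) v.
  by rewrite ev (eq_sym v) (negbTE ne_xv); apply: contraNF ne_xv => /eqP/lag_vk_inl ->.
by apply/eqP/eqP => [[]|->].
Qed.

Lemma lag_indegE (x : dV lagG) :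
  indeg x = if x is inl a then (if a == v then 2 else indeg a) else 2.
Proof.
case: x => [a|i].
  have [->|ne_av] := eqVneq a v; last exact: lag_indeg_old.
  exact: (lag_indeg_vk (leq0n _)).
by rewrite -(lag_vkS i); apply: lag_indeg_vk.
Qed.

Lemma lag_indeg_ge2 :
  (forall x : dV G, 2 <= indeg x) -> forall x : dV lagG, 2 <= indeg x.
Proof. by move=> indeg_ge2 [a|i]; rewrite lag_indegE //; case: eqP. Qed.

Lemma lag_indeg_ge3E :
  [set x : dV lagG | 3 <= indeg x] = inl @: [set x | (x != v) && (3 <= indeg x)].
Proof.
apply/setP => -[a|i]; rewrite inE lag_indegE.
  by rewrite (mem_imset _ _ inl_inj) inE; case: eqP.
by apply/esym/negbTE/imsetP => -[].
Qed.

Lemma connect_lag_vk_v k : k <= d - 2 -> connect (@adj lagG) (vk k) (inl v).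
Proof.
elim: k => [//|k IHk] lt_k; apply: connect_trans (IHk (ltnW lt_k)).
apply/connect1/existsP; exists (inr (Ordinal lt_k)).
by rewrite /= (lag_vkS (Ordinal lt_k)) !eqxx.
Qed.

Lemma adj_lag_inl a b : adj a b -> connect (@adj lagG) (inl a) (inl b).
Proof.
case/existsP => e /andP [/eqP sr_e /eqP rg_e].
have [ev|ne_ev] := eqVneq (rg e) v.
  rewrite -rg_e ev; apply: connect_trans (connect_lag_vk_v (geq_minr (lag_idx o e) _)).
  by apply/connect1/existsP; exists (inl e); rewrite /= sr_e ev !eqxx.
by apply/connect1/existsP; exists (inl e); rewrite /= sr_e (negbTE ne_ev) rg_e !eqxx.
Qed.

Lemma lag_transitive : transitive_graph G -> transitive_graph lagG.
Proof.
move=> G_trans; have lift := connect_homo adj_lag_inl.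
have to_v (x : dV lagG) : connect (@adj lagG) x (inl v).
  case: x => [a|i]; first exact: lift.
  by rewrite -(lag_vkS i); apply: connect_lag_vk_v.
have from_v (y : dV lagG) : connect (@adj lagG) (inl v) y.
  case: y => [b|i]; first exact: lift.
  have lt_i1 : i.+1 < d by have := ltn_ord i; lia.
  set e := o (Ordinal lt_i1); apply: connect_trans (lift _ _ (G_trans v (sr e))) _.
  apply/connect1/existsP; exists (inl e).
  rewrite /= rg_o lag_idx_o /= eqxx (minn_idPl (ltn_ord i)) (lag_vkS i).
  by rewrite !eqxx.
by move=> x y; apply: connect_trans (to_v x) (from_v y).
Qed.
End Lag.

Theorem lemma3p6 (G : digraph) (v : dV G) (o : 'I_(indeg v) -> dE G) :
  transitive_graph G ->
  (forall x : dV G, 2 <= indeg x) ->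
  3 <= indeg v ->
  injective o ->
  (forall j, rg (o j) = v) ->
  transitive_graph (lag o) /\
  (forall x : dV (lag o), 2 <= indeg x) /\
  #|[set x : dV (lag o) | 3 <= indeg x]|.+1 = #|[set x : dV G | 3 <= indeg x]|.
Proof.
move=> G_trans indeg_ge2 d_ge3 o_inj rg_o; have d_ge2 := ltnW d_ge3.
split; first exact: lag_transitive.
split; first exact: lag_indeg_ge2.
rewrite lag_indeg_ge3E // card_imset; last exact: inl_inj.
rewrite [RHS](cardsD1 v) inE d_ge3 add1n; congr _.+1.
by apply: eq_card => x; rewrite !inE.
Qed.
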